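(* Let $X$ be a locally super-compact $L$-sober space. Then $\Omega_LX$ is a continuous $L$-dcpo.
   Context: $L$ is a frame with implication $\to$. $L$-subsets: maps to $L$; nonempty: $\bigvee A=1$; ${\rm sub}_X(A,B)=\bigwedge_xA(x)\to B(x)$. $L$-topology: $\mathcal O(X)\subseteq L^X$ closed under finite meets and arbitrary joins containing all constants $a_X$; interior $A^\circ$ is the join of open sets below $A$. Super-compact: nonempty $A$ with ${\rm sub}_X(A,\bigvee_iV_i)=\bigvee_i{\rm sub}_X(A,V_i)$ for every family of open $V_i$; ${\rm SC}(X)$ their set. Locally super-compact: every open $A=\bigvee_{B\in{\rm SC}(X)}{\rm sub}_X(B,A)\wedge B^\circ$. A point of $\mathcal O(X)$: $p:\mathcal O(X)\to L$ preserving binary meets, arbitrary joins, with $p(\lambda_X)=\lambda$; $[x](A)=A(x)$; $L$-sober: $x\mapsto[x]$ bijective onto the points (in particular $X$ is $T_0$). $\Omega_LX$ is $X$ with the specialization $L$-order $e(x,y)=\bigwedge_{A\in\mathcal O(X)}A(x)\to A(y)$. For an $L$-ordered set $(P,e)$ ($e(x,x)=1$, $e(x,y)\wedge e(y,z)\le e(x,z)$, $e(x,y)\wedge e(y,x)=1\Rightarrow x=y$): ${\downarrow}y(x)=e(x,y)$; $\sqcup A=x$ iff $e(x,y)={\rm sub}_P(A,{\downarrow}y)$ for all $y$; directed: nonempty and $D(x)\wedge D(y)\le\bigvee_zD(z)\wedge e(x,z)\wedge e(y,z)$; ideal: directed lower set; $L$-dcpo: all directed $L$-subsets have suprema; ${\Downarrow}x(y)=\bigwedge\{e(x,\sqcup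 I)\to I(y):I\text{ ideal with a supremum}\}$; continuous $L$-dcpo: an $L$-dcpo in which each ${\Downarrow}x$ is directed with supremum $x$. *)

(** A frame = complete Heyting algebra: a complete lattice (arbitrary joins
    [sup] of subsets) with binary meets and an implication right adjoint to
    meet.  (Infinite distributivity follows from the adjunction.) *)
Record frame := Frame {
  car :> Type;
  le : car -> car -> Prop;
  le_refl : forall a, le a a;
  le_trans : forall a b c, le a b -> le b c -> le a c;
  le_antisym : forall a b, le a b -> le b a -> a = b;
  meet : car -> car -> car;
  meet_l : forall a b, le (meet a b) a;
  meet_r : forall a b, le (meet a b) b;
  meet_glb : forall a b c, le c a -> le c b -> le c (meet a b);
  sup : (car -> Prop) -> car;
  sup_ub : forall (S : car -> Prop) a, S a -> le a (sup S);
  sup_least : forall (S : car -> Prop) b, (forall a, S a -> le a b) -> le (sup S) b;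
  imp : car -> car -> car;
  imp_adj : forall a b c, le (meet a b) c <-> le a (imp b c)
}.

Arguments le {f}.
Arguments meet {f}.
Arguments sup {f}.
Arguments imp {f}.

Section Frames.
Variable L : frame.

Definition top : L := sup (fun _ => True).
Definition jn (I : Type) (f : I -> L) : L := sup (fun a => exists i, f i = a).
Definition inf (S : L -> Prop) : L := sup (fun x => forall s, S s -> le x s).
Definition mt (I : Type) (f : I -> L) : L := inf (fun a => exists i, f i = a).

(** L-subsets of X are maps X -> L *)
Definition nonempty {X : Type} (A : X -> L) : Prop := jn X A = top.
Definition subd {X : Type} (A B : X -> L) : L := mt X (fun x => imp (A x) (B x)).
Definition const {X : Type} (a : L) : X -> L := fun _ => a.

Definition is_Ltopology {X : Type} (O : (X -> L) -> Prop) : Prop :=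
  (forall A B, O A -> O B -> O (fun x => meet (A x) (B x))) /\
  (forall (I : Type) (V : I -> X -> L), (forall i, O (V i)) ->
      O (fun x => jn I (fun i => V i x))) /\
  (forall a : L, O (const a)).

Definition interior {X : Type} (O : (X -> L) -> Prop) (A : X -> L) : X -> L :=
  fun x => sup (fun a => exists U, O U /\ (forall y, le (U y) (A y)) /\ a = U x).

Definition super_compact {X : Type} (O : (X -> L) -> Prop) (A : X -> L) : Prop :=
  nonempty A /\
  forall (I : Type) (V : I -> X -> L), (forall i, O (V i)) ->
    subd A (fun x => jn I (fun i => V i x)) = jn I (fun i => subd A (V i)).

Definition locally_super_compact {X : Type} (O : (X -> L) -> Prop) : Prop :=
  forall A, O A ->
    A = (fun x => sup (fun a => exists B, super_compact O B /\
                                   a = meet (subd B A) (interior O B x))).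

(** points of O(X): maps defined on open L-subsets (values off O(X) are
    irrelevant) preserving binary meets, arbitrary joins and constants *)
Definition is_point {X : Type} (O : (X -> L) -> Prop) (p : (X -> L) -> L) : Prop :=
  (forall A B, O A -> O B -> p (fun x => meet (A x) (B x)) = meet (p A) (p B)) /\
  (forall (I : Type) (V : I -> X -> L), (forall i, O (V i)) ->
      p (fun x => jn I (fun i => V i x)) = jn I (fun i => p (V i))) /\
  (forall a : L, p (const a) = a).

(** L-sober: x |-> [x] (restricted to O(X)) is a bijection onto the points *)
Definition L_sober {X : Type} (O : (X -> L) -> Prop) : Prop :=
  (forall x y : X, (forall A, O A -> A x = A y) -> x = y) /\
  (forall p, is_point O p -> exists x, forall A, O A -> p A = A x).

(** specialization L-order of Omega_L X *)
Definition spec {X : Type} (O : (X -> L) -> Prop) (x y : X) : L :=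
  mt {A : X -> L | O A} (fun A => imp (proj1_sig A x) (proj1_sig A y)).

Definition L_order {P : Type} (e : P -> P -> L) : Prop :=
  (forall x, e x x = top) /\
  (forall x y z, le (meet (e x y) (e y z)) (e x z)) /\
  (forall x y, meet (e x y) (e y x) = top -> x = y).

Definition downset {P : Type} (e : P -> P -> L) (y : P) : P -> L := fun x => e x y.

Definition is_lsup {P : Type} (e : P -> P -> L) (A : P -> L) (x : P) : Prop :=
  forall y, e x y = subd A (downset e y).

Definition directed {P : Type} (e : P -> P -> L) (D : P -> L) : Prop :=
  nonempty D /\
  forall x y, le (meet (D x) (D y))
                 (jn P (fun z => meet (D z) (meet (e x z) (e y z)))).

Definition lower_set {P : Type} (e : P -> P -> L) (D : P -> L) : Prop :=
  forall x y, le (meet (D x) (e y x)) (D y).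

Definition ideal {P : Type} (e : P -> P -> L) (D : P -> L) : Prop :=
  directed e D /\ lower_set e D.

Definition L_dcpo {P : Type} (e : P -> P -> L) : Prop :=
  L_order e /\ forall D, directed e D -> exists x, is_lsup e D x.

Definition waybelow {P : Type} (e : P -> P -> L) (x : P) : P -> L :=
  fun y => mt {Is : (P -> L) * P | ideal e (fst Is) /\ is_lsup e (fst Is) (snd Is)}
              (fun Is => imp (e x (snd (proj1_sig Is))) (fst (proj1_sig Is) y)).

Definition continuous_L_dcpo {P : Type} (e : P -> P -> L) : Prop :=
  L_dcpo e /\
  forall x, directed e (waybelow e x) /\ is_lsup e (waybelow e x) x.

End Frames.

(* By sobriety every point of O(X) is some [x]. Two kinds of points matter:
   for a directed D, U |-> \/_x D(x) /\ U(x) is a point, whose representative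
   is the supremum of D; for a super-compact B, U |-> sub(B, U) is a point,
   represented by a [focus] w of B, so that B behaves like the principal upper
   set of w.  Local super-compactness writes U(x) as \/_B U(w_B) /\ B°(x),
   which makes [approximants x] = \/_B B°(x) /\ e(-, w_B) an ideal with
   supremum x.  Conversely, if I is an ideal with supremum s, then
   B°(x) /\ e(x, s) <= B°(s) <= I(w_B), so [approximants x] is exactly the
   way-below set of x. *)

From Stdlib Require Import FunctionalExtensionality.

Lemma le_trans_via {L : frame} {a : L} (b : L) {c : L} : le a b -> le b c -> le a c.
Proof. apply le_trans. Qed.

Lemma le_top {L : frame} (a : L) : le a (top L).
Proof. apply sup_ub; exact I. Qed.

Ltac lattice :=
  match goal with
  | |- le ?a ?a => apply le_refl
  | |- le _ (top _) => apply le_top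
  | |- le _ (meet _ _) => apply meet_glb; lattice
  | |- le (meet _ _) _ =>
      first [ apply (le_trans_via _ (meet_l _ _ _)); lattice
            | apply (le_trans_via _ (meet_r _ _ _)); lattice ]
  end.

Lemma meet_mono {L : frame} (a b c d : L) :
  le a c -> le b d -> le (meet a b) (meet c d).
Proof.
  intros Hac Hbd; apply meet_glb.
  - apply (le_trans_via a); [lattice | exact Hac].
  - apply (le_trans_via b); [lattice | exact Hbd].
Qed.

Lemma top_le_eq {L : frame} (a : L) : le (top L) a -> a = top L.
Proof. intros H; apply le_antisym; [apply le_top | exact H]. Qed.

Lemma imp_mp {L : frame} (a b : L) : le (meet (imp a b) a) b.
Proof. apply imp_adj, le_refl. Qed.

Lemma meet_supl_le {L : frame} (S : L -> Prop) (b c : L) :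
  (forall s, S s -> le (meet s b) c) -> le (meet (sup S) b) c.
Proof.
  intros H; apply imp_adj, sup_least; intros s Hs.
  apply imp_adj; auto.
Qed.

Lemma meet_supr_le {L : frame} (S : L -> Prop) (b c : L) :
  (forall s, S s -> le (meet b s) c) -> le (meet b (sup S)) c.
Proof.
  intros H; apply (le_trans_via (meet (sup S) b)); [lattice |].
  apply meet_supl_le; intros s Hs.
  apply (le_trans_via (meet b s)); [lattice | auto].
Qed.

Lemma jn_ub {L : frame} I (f : I -> L) i : le (f i) (jn L I f).
Proof. apply sup_ub; exists i; reflexivity. Qed.

Lemma le_jn {L : frame} {I} {f : I -> L} {a : L} (i : I) :
  le a (f i) -> le a (jn L I f).
Proof. intros H; apply (le_trans_via _ H), jn_ub. Qed.

Lemma jn_least {L : frame} I (f : I -> L) b :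
  (forall i, le (f i) b) -> le (jn L I f) b.
Proof. intros H; apply sup_least; intros a [i <-]; auto. Qed.

Lemma meet_jnl_le {L : frame} I (f : I -> L) b c :
  (forall i, le (meet (f i) b) c) -> le (meet (jn L I f) b) c.
Proof. intros H; apply meet_supl_le; intros s [i <-]; auto. Qed.

Lemma meet_jnr_le {L : frame} I (f : I -> L) b c :
  (forall i, le (meet b (f i)) c) -> le (meet b (jn L I f)) c.
Proof. intros H; apply meet_supr_le; intros s [i <-]; auto. Qed.

Lemma mt_lb {L : frame} I (f : I -> L) i : le (mt L I f) (f i).
Proof. apply sup_least; intros x Hx; apply Hx; exists i; reflexivity. Qed.

Lemma mt_glb {L : frame} I (f : I -> L) b :
  (forall i, le b (f i)) -> le b (mt L I f).
Proof. intros H; apply sup_ub; intros s [i <-]; auto. Qed.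

Lemma le_subd {L : frame} {X} (A B : X -> L) c :
  (forall x, le (meet c (A x)) (B x)) -> le c (subd L A B).
Proof. intros H; apply mt_glb; intros x; apply imp_adj; auto. Qed.

Lemma subd_mp {L : frame} {X} (A B : X -> L) x :
  le (meet (subd L A B) (A x)) (B x).
Proof. apply imp_adj, (mt_lb X (fun x => imp (A x) (B x)) x). Qed.

Lemma lsup_unique {L : frame} {P} (e : P -> P -> L) D s s' :
  L_order L e -> is_lsup L e D s -> is_lsup L e D s' -> s = s'.
Proof.
  intros [e_refl [_ e_antisym]] Hs Hs'; apply e_antisym.
  rewrite Hs, <- Hs', e_refl, Hs', <- Hs, e_refl.
  apply top_le_eq; lattice.
Qed.

Section SpecializationOrder.

Variables (L : frame) (X : Type) (O : (X -> L) -> Prop).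

Notation e := (spec L O).

Lemma le_spec x y c :
  (forall U, O U -> le (meet c (U x)) (U y)) -> le c (e x y).
Proof. intros H; apply mt_glb; intros [U HU]; apply imp_adj; simpl; auto. Qed.

Lemma spec_mp x y U : O U -> le (meet (e x y) (U x)) (U y).
Proof.
  intros HU; apply imp_adj.
  exact (mt_lb {A : X -> L | O A}
           (fun A => imp (proj1_sig A x) (proj1_sig A y)) (exist _ U HU)).
Qed.

Lemma spec_refl x : e x x = top L.
Proof. apply top_le_eq, le_spec; intros; lattice. Qed.

Lemma spec_trans x y z : le (meet (e x y) (e y z)) (e x z).
Proof.
  apply le_spec; intros U HU.
  apply (le_trans_via (meet (e y z) (meet (e x y) (U x)))); [lattice |].
  apply (le_trans_via (meet (e y z) (U y))); [| apply spec_mp; auto].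
  apply meet_mono; [apply le_refl | apply spec_mp; auto].
Qed.

Lemma spec_top_eq x y U : O U -> e x y = top L -> le (U x) (U y).
Proof.
  intros HU Exy; apply (le_trans_via (meet (e x y) (U x))); [| apply spec_mp; auto].
  rewrite Exy; lattice.
Qed.

Lemma spec_order : L_sober L O -> L_order L e.
Proof.
  intros [T0 _]; split; [| split].
  - apply spec_refl.
  - apply spec_trans.
  - intros x y Exy; apply T0; intros A HA.
    apply le_antisym; apply spec_top_eq; auto;
      apply top_le_eq; rewrite <- Exy; lattice.
Qed.

Lemma directed_is_point D :
  directed L e D -> is_point L O (fun U => jn L X (fun x => meet (D x) (U x))).
Proof.
  intros [D_ne D_dir]; split; [| split].
  - intros A B HA HB; apply le_antisym.
    + apply jn_least; intros x; apply meet_glb; apply (le_jn x); lattice.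
    + apply meet_jnl_le; intros x; apply meet_jnr_le; intros y.
      apply (le_trans_via
               (meet (jn L X (fun z => meet (D z) (meet (e x z) (e y z))))
                     (meet (A x) (B y)))).
      { apply (le_trans_via (meet (meet (D x) (D y)) (meet (A x) (B y)))); [lattice |].
        apply meet_mono; [apply D_dir | apply le_refl]. }
      apply meet_jnl_le; intros z; apply (le_jn z); simpl.
      apply meet_glb; [lattice |]; apply meet_glb.
      * apply (le_trans_via (meet (e x z) (A x))); [lattice | apply spec_mp; auto].
      * apply (le_trans_via (meet (e y z) (B y))); [lattice | apply spec_mp; auto].
  - intros I V HV; apply le_antisym.
    + apply jn_least; intros x; apply meet_jnr_le; intros i.
      apply (le_jn i), (le_jn x); apply le_refl.
    + apply jn_least; intros i; apply jn_least; intros x.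
      apply (le_jn x), meet_mono; [apply le_refl | apply (jn_ub _ (fun i => V i x))].
  - intros a; apply le_antisym.
    + apply jn_least; intros x; unfold const; lattice.
    + apply (le_trans_via (meet (jn L X D) a)).
      { unfold nonempty in D_ne; rewrite D_ne; lattice. }
      apply meet_jnl_le; intros x; apply (le_jn x); apply le_refl.
Qed.

Lemma spec_lsup_of_open_values D s :
  (forall U, O U -> U s = jn L X (fun x => meet (D x) (U x))) ->
  is_lsup L e D s.
Proof.
  intros Hs y; apply le_antisym.
  - apply le_subd; intros x; unfold downset; apply le_spec; intros U HU.
    apply (le_trans_via (meet (e s y) (U s))); [| apply spec_mp; auto].
    rewrite (Hs U HU).
    apply (le_trans_via (meet (e s y) (meet (D x) (U x)))); [lattice |].
    apply meet_mono; [apply le_refl | apply (jn_ub _ (fun x => meet (D x) (U x)))].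
  - apply le_spec; intros U HU; rewrite (Hs U HU).
    apply meet_jnr_le; intros x.
    apply (le_trans_via (meet (e x y) (U x))); [| apply spec_mp; auto].
    apply (le_trans_via (meet (meet (subd L D (downset L e y)) (D x)) (U x))); [lattice |].
    apply meet_mono; [apply (subd_mp D (downset L e y) x) | apply le_refl].
Qed.

Hypothesis sober : L_sober L O.

Lemma directed_lsup_open D :
  directed L e D ->
  exists s, is_lsup L e D s /\
    forall U, O U -> U s = jn L X (fun x => meet (D x) (U x)).
Proof.
  intros HD; destruct (proj2 sober _ (directed_is_point D HD)) as [s Hs].
  assert (Us : forall U, O U -> U s = jn L X (fun x => meet (D x) (U x)))
    by (intros U HU; symmetry; auto).
  exists s; split; [apply spec_lsup_of_open_values |]; exact Us.
Qed.

Lemma open_at_lsup D s U :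
  directed L e D -> is_lsup L e D s -> O U ->
  U s = jn L X (fun x => meet (D x) (U x)).
Proof.
  intros HD Hs HU; destruct (directed_lsup_open D HD) as [s' [Hs' Us']].
  rewrite (lsup_unique _ D s s' (spec_order sober) Hs Hs'); auto.
Qed.

Definition focus (B : X -> L) (w : X) : Prop := forall U, O U -> U w = subd L B U.

Lemma super_compact_subd_is_point B :
  super_compact L O B -> is_point L O (subd L B).
Proof.
  intros [B_ne B_sc]; split; [| split].
  - intros A C HA HC; apply le_antisym.
    + apply meet_glb; apply le_subd; intros x;
        apply (le_trans_via _ (subd_mp B _ x)); simpl; lattice.
    + apply le_subd; intros x; apply meet_glb.
      * apply (le_trans_via (meet (subd L B A) (B x))); [lattice | apply subd_mp].
      * apply (le_trans_via (meet (subd L B C) (B x))); [lattice | apply subd_mp].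
  - exact B_sc.
  - intros a; apply le_antisym.
    + apply (le_trans_via (meet (subd L B (const L a)) (jn L X B))).
      { unfold nonempty in B_ne; rewrite B_ne; lattice. }
      apply meet_jnr_le; intros x; apply (subd_mp B (const L a) x).
    + apply le_subd; intros x; unfold const; lattice.
Qed.

Lemma super_compact_focus B : super_compact L O B -> exists w, focus B w.
Proof.
  intros HB; destruct (proj2 sober _ (super_compact_subd_is_point B HB)) as [w Hw].
  exists w; intros U HU; symmetry; auto.
Qed.

Lemma focus_le_spec B w y : focus B w -> le (B y) (e w y).
Proof.
  intros Hw; apply le_spec; intros U HU; rewrite (Hw U HU).
  apply (le_trans_via (meet (subd L B U) (B y))); [lattice | apply subd_mp].
Qed.

Lemma interior_le B y : le (interior L O B y) (B y).
Proof. apply sup_least; intros a [U [_ [HUB ->]]]; auto. Qed.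

Hypothesis topology : is_Ltopology L O.

Lemma interior_open B : O (interior L O B).
Proof.
  pose proof topology as [_ [O_jn _]].
  set (Below := {U : X -> L | O U /\ forall y, le (U y) (B y)}).
  replace (interior L O B) with (fun x => jn L Below (fun U => proj1_sig U x)).
  { apply O_jn; intros U; exact (proj1 (proj2_sig U)). }
  apply functional_extensionality; intros x; apply le_antisym.
  - apply jn_least; intros [U [HU HUB]]; apply sup_ub; exists U; auto.
  - apply sup_least; intros a [U [HU [HUB ->]]].
    apply (le_jn (exist _ U (conj HU HUB) : Below)); apply le_refl.
Qed.

Lemma focus_interior_le_ideal B w J s :
  focus B w -> ideal L e J -> is_lsup L e J s -> le (interior L O B s) (J w).
Proof.
  intros Hw [J_dir J_low] Hs.
  rewrite (open_at_lsup J s _ J_dir Hs (interior_open B)).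
  apply jn_least; intros y.
  apply (le_trans_via (meet (J y) (e w y))); [| apply J_low].
  apply meet_mono; [apply le_refl |].
  apply (le_trans_via (B y)); [apply interior_le | apply focus_le_spec; auto].
Qed.

Hypothesis locally_sc : locally_super_compact L O.

Lemma lsc_open_meet_le x U c d :
  O U ->
  (forall B w, super_compact L O B -> focus B w ->
     le (meet c (meet (U w) (interior L O B x))) d) ->
  le (meet c (U x)) d.
Proof.
  intros HU H; rewrite (locally_sc U HU); apply meet_supr_le; intros a [B [HB ->]].
  destruct (super_compact_focus B HB) as [w Hw]; rewrite <- (Hw U HU); auto.
Qed.

Definition approximants (x : X) : X -> L :=
  fun z => sup (fun a => exists B w, super_compact L O B /\ focus B w /\
                                    a = meet (interior L O B x) (e z w)).

Lemma interior_le_approximants x B w :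
  super_compact L O B -> focus B w -> le (interior L O B x) (approximants x w).
Proof.
  intros HB Hw; apply (le_trans_via (meet (interior L O B x) (e w w))).
  { rewrite spec_refl; lattice. }
  apply sup_ub; exists B, w; auto.
Qed.

Lemma approximants_le_spec x z : le (approximants x z) (e z x).
Proof.
  apply sup_least; intros a [B [w [HB [Hw ->]]]].
  apply (le_trans_via (meet (e z w) (e w x))); [| apply spec_trans].
  apply meet_glb; [lattice |].
  apply (le_trans_via (B x)); [| apply focus_le_spec; auto].
  apply (le_trans_via (interior L O B x)); [lattice | apply interior_le].
Qed.

Lemma approximants_nonempty x : nonempty L (approximants x).
Proof.
  pose proof topology as [_ [_ O_const]].
  apply top_le_eq.
  apply (le_trans_via (meet (top L) (const L (top L) x))); [unfold const; lattice |].
  apply lsc_open_meet_le; auto; intros B w HB Hw.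
  apply (le_jn w), (le_trans_via (interior L O B x)); [lattice |].
  apply interior_le_approximants; auto.
Qed.

Lemma spec_trans_interior_focus a w1 B1 w :
  focus B1 w1 -> le (meet (e a w1) (interior L O B1 w)) (e a w).
Proof.
  intros Hw1; apply (le_trans_via (meet (e a w1) (e w1 w))); [| apply spec_trans].
  apply meet_mono; [apply le_refl |].
  apply (le_trans_via (B1 w)); [apply interior_le | apply focus_le_spec; auto].
Qed.

Lemma approximants_directed x : directed L e (approximants x).
Proof.
  split; [apply approximants_nonempty |]; intros a b.
  apply meet_supl_le; intros s1 [B1 [w1 [HB1 [Hw1 ->]]]].
  apply meet_supr_le; intros s2 [B2 [w2 [HB2 [Hw2 ->]]]].
  set (W := fun y => meet (interior L O B1 y) (interior L O B2 y)).
  assert (HW : O W) by (apply (proj1 topology); apply interior_open).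
  apply (le_trans_via (meet (meet (e a w1) (e b w2)) (W x))); [unfold W; lattice |].
  apply lsc_open_meet_le; auto; intros B w HB Hw.
  apply (le_jn w); apply meet_glb.
  - apply (le_trans_via (interior L O B x)); [lattice |].
    apply interior_le_approximants; auto.
  - unfold W; apply meet_glb.
    + apply (le_trans_via (meet (e a w1) (interior L O B1 w))); [lattice |].
      apply spec_trans_interior_focus; auto.
    + apply (le_trans_via (meet (e b w2) (interior L O B2 w))); [lattice |].
      apply spec_trans_interior_focus; auto.
Qed.

Lemma approximants_lower_set x : lower_set L e (approximants x).
Proof.
  intros z y; apply meet_supl_le; intros s [B [w [HB [Hw ->]]]].
  apply (le_trans_via (meet (interior L O B x) (e y w))).
  - apply meet_glb; [lattice |].
    apply (le_trans_via (meet (e y z) (e z w))); [lattice | apply spec_trans].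
  - apply sup_ub; exists B, w; auto.
Qed.

Lemma approximants_ideal x : ideal L e (approximants x).
Proof. split; [apply approximants_directed | apply approximants_lower_set]. Qed.

Lemma approximants_lsup x : is_lsup L e (approximants x) x.
Proof.
  intros y; apply le_antisym.
  - apply le_subd; intros z; unfold downset.
    apply (le_trans_via (meet (e z x) (e x y))); [| apply spec_trans].
    apply meet_glb; [| lattice].
    apply (le_trans_via (approximants x z)); [lattice | apply approximants_le_spec].
  - apply le_spec; intros U HU; apply lsc_open_meet_le; auto; intros B w HB Hw.
    apply (le_trans_via (meet (e w y) (U w))); [| apply spec_mp; auto].
    apply meet_glb; [| lattice].
    apply (le_trans_via (meet (subd L (approximants x) (downset L e y)) (approximants x w))).
    + apply meet_glb; [lattice |].
      apply (le_trans_via (interior L O B x)); [lattice |].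
      apply interior_le_approximants; auto.
    + apply (subd_mp (approximants x) (downset L e y) w).
Qed.

Lemma waybelow_approximants x : waybelow L e x = approximants x.
Proof.
  apply functional_extensionality; intros z; apply le_antisym.
  - apply (le_trans_via _ (mt_lb _ _ (exist _ (approximants x, x)
             (conj (approximants_ideal x) (approximants_lsup x))))); simpl.
    rewrite spec_refl.
    apply (le_trans_via (meet (imp (top L) (approximants x z)) (top L)));
      [lattice | apply imp_mp].
  - apply mt_glb; intros [[J s] [HJ Hs]]; simpl in *; apply imp_adj.
    apply meet_supl_le; intros a [B [w [HB [Hw ->]]]].
    apply (le_trans_via (meet (J w) (e z w))); [| apply (proj2 HJ)].
    apply meet_glb; [| lattice].
    apply (le_trans_via (interior L O B s)).
    + apply (le_trans_via (meet (e x s) (interior L O B x))); [lattice |].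
      apply spec_mp, interior_open.
    + apply focus_interior_le_ideal; auto.
Qed.

End SpecializationOrder.

Theorem proposition4p6 (L : frame) (X : Type) (O : (X -> L) -> Prop) :
  is_Ltopology L O ->
  locally_super_compact L O ->
  L_sober L O ->
  continuous_L_dcpo L (spec L O).
Proof.
  intros HT HL HS; split; [split |].
  - apply spec_order; exact HS.
  - intros D HD; destruct (directed_lsup_open L X O HS D HD) as [s [Hs _]].
    exists s; exact Hs.
  - intros x; rewrite (waybelow_approximants L X O HS HT HL x).
    split; [apply approximants_directed | apply approximants_lsup]; assumption.
Qed.
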